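(* Let $k,l\ge1$ and $1\le r\le 2k(2l+1)$. Let $\overline{\mathcal{B}}(2k,2l+1;r)$ be the subset of $\mathcal{B}(2k,2l+1;r)$ consisting of boards whose board partition $(\lambda_1,\lambda_2,\lambda_3,\lambda_4,\delta_1,\delta_2)$ satisfies: (i) $\lambda_1\ge\lambda_i$ for all $i>1$; (ii) if $\lambda_1=\lambda_2$ then $\lambda_3\ge\lambda_4$; (iii) if $\lambda_1=\lambda_3$ then $\lambda_2\ge\lambda_4$, and if in addition $\lambda_2=\lambda_4$ then $\delta_1\ge\delta_2$; (iv) if $\lambda_1=\lambda_4$ then $\lambda_2\ge\lambda_3$, and if in addition $\lambda_2=\lambda_3$ then $\delta_1\ge\delta_2$. Then: (1) $\overline{\mathcal{B}}(2k,2l+1;r)$ is a disjoint union of sets each consisting of all boards in $\mathcal{B}(2k,2l+1;r)$ with some fixed board partition; (2) every board of $\mathcal{B}(2k,2l+1;r)$ is equivalent under $\langle H,V\rangle$ to some board of $\overline{\mathcal{B}}(2k,2l+1;r)$; (3) if two boards of $\overline{\mathcal{B}}(2k,2l+1;r)$ are equivalent under $\langle H,V\rangle$, they have the same board partition.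
   Context: A $2k\times(2l+1)$ grid ($2k$ rows numbered top to bottom, $2l+1$ columns numbered left to right); $\mathcal{B}(2k,2l+1;r)$ is the set of boards, i.e. subsets of exactly $r$ blocked cells. The symmetry group is $\langle H,V\rangle=\{R_0,H,V,R_{180}\}$ ($H$: reflection across the horizontal midline; $V$: across the vertical midline; $R_{180}$: 180-degree rotation); boards are equivalent if some element maps one to the other. The grid is divided into six regions: $\Lambda_1$ = rows $1..k$, cols $1..l$; $\Lambda_2$ = rows $1..k$, cols $l+2..2l+1$; $\Lambda_3$ = rows $k+1..2k$, cols $l+2..2l+1$; $\Lambda_4$ = rows $k+1..2k$, cols $1..l$; $\Delta_1$ = rows $1..k$, col $l+1$; $\Delta_2$ = rows $k+1..2k$, col $l+1$. The board partition $(\lambda_1,\lambda_2,\lambda_3,\lambda_4,\delta_1,\delta_2)$ records the number of blocked cells $\lambda_i$ in $\Lambda_i$ and $\delta_i$ in $\Delta_i$. *)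

From mathcomp Require Import all_boot.
Set Implicit Arguments. Unset Strict Implicit. Unset Printing Implicit Defensive.

(* Grid with 2k rows and 2l+1 columns; rows/cols are 0-indexed here:
   row i : 'I_(2k) corresponds to paper row i+1, column j to paper column j+1. *)
Definition cell (k l : nat) : finType := ('I_(2 * k) * 'I_(2 * l + 1))%type.

Definition is_board (k l r : nat) (B : {set cell k l}) : bool := #|B| == r.

(* Symmetries: H = reflection across horizontal midline (flips rows),
   V = reflection across vertical midline (flips columns).
   sym a b: flip rows iff a, flip columns iff b.
   R0 = sym false false, H = sym true false, V = sym false true,
   R180 = sym true true. *)
Definition sym (k l : nat) (a b : bool) (c : cell k l) : cell k l :=
  ((if a then rev_ord c.1 else c.1), (if b then rev_ord c.2 else c.2)).

Definition equiv_boards (k l : nat) (B1 B2 : {set cell k l}) : Prop :=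
  exists a b : bool, B2 = sym a b @: B1.

Definition top k (c : 'I_(2 * k)) : bool := (c < k)%N.
Definition leftc l (c : 'I_(2 * l + 1)) : bool := (c < l)%N.
Definition midc l (c : 'I_(2 * l + 1)) : bool := (c == l :> nat).
Definition rightc l (c : 'I_(2 * l + 1)) : bool := (l < c)%N.

Definition Lambda1 k l : {set cell k l} := [set c | top c.1 && leftc c.2].
Definition Lambda2 k l : {set cell k l} := [set c | top c.1 && rightc c.2].
Definition Lambda3 k l : {set cell k l} := [set c | ~~ top c.1 && rightc c.2].
Definition Lambda4 k l : {set cell k l} := [set c | ~~ top c.1 && leftc c.2].
Definition Delta1 k l : {set cell k l} := [set c | top c.1 && midc c.2].
Definition Delta2 k l : {set cell k l} := [set c | ~~ top c.1 && midc c.2].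

Definition partition_t := (nat * nat * nat * nat * nat * nat)%type.

Definition board_partition k l (B : {set cell k l}) : partition_t :=
  (#|B :&: Lambda1 k l|, #|B :&: Lambda2 k l|, #|B :&: Lambda3 k l|,
   #|B :&: Lambda4 k l|, #|B :&: Delta1 k l|, #|B :&: Delta2 k l|).

Definition good_partition (p : partition_t) : bool :=
  let: (l1, l2, l3, l4, d1, d2) := p in
  [&& (l2 <= l1) && (l3 <= l1) && (l4 <= l1),
      (l1 == l2) ==> (l4 <= l3),
      (l1 == l3) ==> ((l4 <= l2) && ((l2 == l4) ==> (d2 <= d1))) &
      (l1 == l4) ==> ((l3 <= l2) && ((l2 == l3) ==> (d2 <= d1)))].

Definition in_Bbar k l r (B : {set cell k l}) : bool :=
  is_board r B && good_partition (board_partition B).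

From mathcomp Require Import all_boot zify.

(* The symmetries H and V act on board partitions by permuting the six counts:
   H exchanges top and bottom regions, V exchanges left and right ones.
   Conditions (i)-(iv) single out one partition in each orbit of this action:
   some image of every partition satisfies them, and whenever a partition and
   one of its images both satisfy them the two images coincide.  Since
   membership in the distinguished set only depends on the board partition and
   the symmetries preserve the number of blocked cells, the three claims follow. *)

Lemma card_imsetI_preimset (T : finType) (f : T -> T) (A S : {set T}) :
  injective f -> #|f @: A :&: S| = #|A :&: f @^-1: S|.
Proof.
move=> injf; rewrite -(card_preimset _ injf) preimsetI; congr #|_ :&: _|.
by apply/setP=> x; rewrite !inE mem_imset.
Qed.

Definition sym_partition (a b : bool) (p : partition_t) : partition_t :=
  let: (l1, l2, l3, l4, d1, d2) := p in
  match a, b with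
  | false, false => (l1, l2, l3, l4, d1, d2)
  | true, false => (l4, l3, l2, l1, d2, d1)
  | false, true => (l2, l1, l4, l3, d1, d2)
  | true, true => (l3, l4, l1, l2, d2, d1)
  end.

Lemma exists_good_sym_partition (p : partition_t) :
  exists a b, good_partition (sym_partition a b p).
Proof.
case: p => [[[[[l1 l2] l3] l4] d1] d2].
have : [|| good_partition (l1, l2, l3, l4, d1, d2),
           good_partition (l4, l3, l2, l1, d2, d1),
           good_partition (l2, l1, l4, l3, d1, d2) |
           good_partition (l3, l4, l1, l2, d2, d1)].
  by rewrite /good_partition; lia.
case/or4P=> good_p.
- by exists false, false.
- by exists true, false.
- by exists false, true.
- by exists true, true.
Qed.

Lemma good_sym_partition_eq (a b : bool) (p : partition_t) :
  good_partition p -> good_partition (sym_partition a b p) ->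
  sym_partition a b p = p.
Proof.
case: p => [[[[[l1 l2] l3] l4] d1] d2].
case: a; case: b; rewrite /sym_partition /good_partition // => good_p good_q.
- by have [[-> ->] ->] : (l3 = l1 /\ l4 = l2) /\ d2 = d1 by lia.
- by have [[-> ->] ->] : (l4 = l1 /\ l3 = l2) /\ d2 = d1 by lia.
- by have [-> ->] : l2 = l1 /\ l4 = l3 by lia.
Qed.

Section BoardSymmetries.

Variables k l : nat.

Lemma symK (a b : bool) : involutive (@sym k l a b).
Proof.
by case=> i j; rewrite /sym /=; congr pair; [case: a | case: b]; rewrite ?rev_ordK.
Qed.

Lemma sym_inj (a b : bool) : injective (@sym k l a b).
Proof. exact: can_inj (symK a b). Qed.

Lemma top_rev_ord (i : 'I_(2 * k)) : top (rev_ord i) = ~~ top i.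
Proof. by rewrite /top /=; have := ltn_ord i; lia. Qed.

Lemma leftc_rev_ord (j : 'I_(2 * l + 1)) : leftc (rev_ord j) = rightc j.
Proof. by rewrite /leftc /rightc /=; have := ltn_ord j; lia. Qed.

Lemma rightc_rev_ord (j : 'I_(2 * l + 1)) : rightc (rev_ord j) = leftc j.
Proof. by rewrite /leftc /rightc /=; have := ltn_ord j; lia. Qed.

Lemma midc_rev_ord (j : 'I_(2 * l + 1)) : midc (rev_ord j) = midc j.
Proof. by rewrite /midc /=; have := ltn_ord j; lia. Qed.

Lemma board_partition_sym (a b : bool) (B : {set cell k l}) :
  board_partition (sym a b @: B) = sym_partition a b (board_partition B).
Proof.
rewrite /board_partition !(card_imsetI_preimset _ _ _ _ (sym_inj a b)) /sym_partition.
by case: a; case: b; congr (_, _, _, _, _, _); apply: eq_card => c;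
  rewrite !inE /sym ?top_rev_ord ?leftc_rev_ord ?rightc_rev_ord ?midc_rev_ord
          ?negbK.
Qed.

Lemma is_board_sym (r : nat) (a b : bool) (B : {set cell k l}) :
  is_board r (sym a b @: B) = is_board r B.
Proof. by rewrite /is_board (card_imset _ (sym_inj a b)). Qed.

End BoardSymmetries.

Theorem theorem4p9 (k l r : nat) :
  (1 <= k)%N -> (1 <= l)%N -> (1 <= r)%N -> (r <= 2 * k * (2 * l + 1))%N ->
  (* (1) Bbar is a union of full fibres of the board-partition map *)
  (exists P : pred partition_t,
     forall B : {set cell k l},
       in_Bbar r B = is_board r B && P (board_partition B)) /\
  (* (2) every board is equivalent to a board of Bbar *)
  (forall B : {set cell k l}, is_board r B ->
     exists B' : {set cell k l}, in_Bbar r B' /\ equiv_boards B B') /\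
  (* (3) equivalent boards of Bbar have the same board partition *)
  (forall B1 B2 : {set cell k l}, in_Bbar r B1 -> in_Bbar r B2 ->
     equiv_boards B1 B2 -> board_partition B1 = board_partition B2).
Proof.
move=> _ _ _ _; split; first by exists good_partition.
split=> [B board_B | B1 B2 /andP[_ good1] /andP[_ good2] [a [b def_B2]]].
  have [a [b good_ab]] := exists_good_sym_partition (board_partition B).
  exists (sym a b @: B); split; last by exists a, b.
  by rewrite /in_Bbar is_board_sym board_partition_sym board_B good_ab.
rewrite def_B2 board_partition_sym in good2 *.
by rewrite good_sym_partition_eq.
Qed.
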